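(* Let $q$ be a prime power, let $b,n,m',s\in\mathbb{N}$ with $b<n$, and set $m=m's$. Let $\mathcal S_q=\{\mathbf x\in\mathbb F_q^n:\mathrm{wt}(\mathbf x)\le b\}$. Fix a primitive polynomial $p(x)$ of degree $s$ over $\mathbb F_q$ and a root $\alpha\in\mathbb F_{q^s}$ of it, and let $\phi_s$ be the associated map $\mathbb F_q^{m\times n}\to\mathbb F_{q^s}^{m'\times n}$ described in the context. Let $\mathbf A\in\mathbb F_q^{m\times n}$ be such that $\phi_s(\mathbf A)$ is a parity check matrix of an $[n,n-m',d]_{q^s}$ linear code with $d>2b$. Then every $\mathbf x\in\mathcal S_q$ can be exactly recovered from the noiseless measurement $\mathbf y=\mathbf A\mathbf x$; that is, there exists a map $D:\mathbb F_q^m\to\mathbb F_q^n$ with $D(\mathbf A\mathbf x)=\mathbf x$ for all $\mathbf x\in\mathcal S_q$.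
   Context: $\mathbb F_q$ denotes the finite field with $q$ elements and $\mathrm{wt}(\mathbf x)$ the number of nonzero entries of a vector $\mathbf x$. A primitive polynomial of degree $s$ over $\mathbb F_q$ is a monic irreducible polynomial of degree $s$ having a primitive element $\alpha$ of $\mathbb F_{q^s}$ (a generator of its multiplicative group) as a root; then $\{1,\alpha,\dots,\alpha^{s-1}\}$ is a basis of $\mathbb F_{q^s}$ over $\mathbb F_q$, and $\mathbb F_q\subseteq\mathbb F_{q^s}$. For $m=m's$ and $\mathbf C=[c_{ij}]\in\mathbb F_q^{m\times n}$, $\phi_s(\mathbf C)=[c'_{kl}]\in\mathbb F_{q^s}^{m'\times n}$ is defined by $c'_{kl}=\sum_{t=0}^{s-1}c_{(k-1)s+t+1,\,l}\,\alpha^t$ ($1\le k\le m'$, $1\le l\le n$). An $[N,K,D]_Q$ linear code is a $K$-dimensional subspace of $\mathbb F_Q^N$ whose minimum Hamming distance between distinct codewords is $D$. A parity check matrix of such a code is an $(N-K)\times N$ matrix over $\mathbb F_Q$ of rank $N-K$ whose null space is the code. *)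

From HB Require Import structures.
From mathcomp Require Import all_boot all_order all_algebra all_field.
From mathcomp Require Import zify.
Set Implicit Arguments. Unset Strict Implicit. Unset Printing Implicit Defensive.
Import GRing.Theory.
Local Open Scope ring_scope.

Definition wt (K : nzRingType) (n : nat) (x : 'cV[K]_n) : nat :=
  #|[set j : 'I_n | x j 0 != 0]|.

(* row index (k-1)s + t + 1 (1-based) = k*s + t (0-based) *)
Lemma phi_idx_proof (m' s : nat) (k : 'I_m') (t : 'I_s) : (k * s + t < m' * s)%N.
Proof.
have hk := ltn_ord k; have ht := ltn_ord t.
have : (k.+1 * s <= m' * s)%N by rewrite leq_mul2r hk orbT.
rewrite mulSn; lia.
Qed.

Definition phi_idx (m' s : nat) (k : 'I_m') (t : 'I_s) : 'I_(m' * s) :=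
  Ordinal (phi_idx_proof k t).

Definition phi_s (F L : fieldType) (iota : {rmorphism F -> L}) (alpha : L)
  (m' s n : nat) (A : 'M[F]_(m' * s, n)) : 'M[L]_(m', n) :=
  \matrix_(k < m', l < n) \sum_(t < s) iota (A (phi_idx k t) l) * alpha ^+ t.

Definition code_of (L : fieldType) (r n : nat) (H : 'M[L]_(r, n)) : pred 'cV[L]_n :=
  fun c => H *m c == 0.

Definition is_parity_check_of (L : fieldType) (r N : nat) (H : 'M[L]_(r, N))
  (K D : nat) : Prop :=
  r = (N - K)%N /\ \rank H = (N - K)%N /\
  (exists2 c : 'cV[L]_N, (c \in code_of H) && (c != 0) & wt c = D) /\
  (forall c : 'cV[L]_N, c \in code_of H -> c != 0 -> (D <= wt c)%N).

Definition primitive_poly_root (F L : finFieldType) (iota : {rmorphism F -> L})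
  (s : nat) (p : {poly F}) (alpha : L) : Prop :=
  [/\ p \is monic, irreducible_poly p, size p = s.+1,
      root (map_poly iota p) alpha & (#|L|.-1).-primitive_root alpha].

From HB Require Import structures.
From mathcomp Require Import all_boot all_order all_algebra all_field.
Set Implicit Arguments. Unset Strict Implicit. Unset Printing Implicit Defensive.
Import GRing.Theory.
Local Open Scope ring_scope.

(* If A x = A y with x, y of weight at most b, then x - y lies in the kernel of
   A, so its image under the field embedding is a codeword of the code with
   parity check matrix phi_s(A) of weight at most 2b < d; hence x = y.  A
   syndrome therefore determines the sparse vector, and a decoder is obtained by
   picking the unique sparse preimage. *)

Lemma phi_s_mul (F L : fieldType) (iota : {rmorphism F -> L}) (alpha : L)
    (m' s n r : nat) (A : 'M[F]_(m' * s, n)) (Z : 'M[F]_(n, r)) :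
  phi_s iota alpha (A *m Z) = phi_s iota alpha A *m map_mx iota Z.
Proof.
apply/matrixP=> k j; rewrite !mxE.
under [RHS]eq_bigr => l _ do rewrite !mxE big_distrl /=.
rewrite exchange_big /=; apply: eq_bigr => t _.
rewrite !mxE rmorph_sum big_distrl /=; apply: eq_bigr => l _.
by rewrite rmorphM /= -!mulrA [alpha ^+ t * _]mulrC.
Qed.

Lemma phi_s0 (F L : fieldType) (iota : {rmorphism F -> L}) (alpha : L)
    (m' s n : nat) :
  phi_s iota alpha (0 : 'M[F]_(m' * s, n)) = 0.
Proof.
apply/matrixP=> k j; rewrite !mxE big1 // => t _.
by rewrite mxE rmorph0 mul0r.
Qed.

Lemma wt_map_mx (F L : fieldType) (iota : {rmorphism F -> L}) (n : nat)
    (z : 'cV[F]_n) :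
  wt (map_mx iota z) = wt z.
Proof. by apply: eq_card => j; rewrite !inE mxE fmorph_eq0. Qed.

Lemma wtB_le (K : nzRingType) (n : nat) (x y : 'cV[K]_n) :
  (wt (x - y) <= wt x + wt y)%N.
Proof.
apply: leq_trans (leq_card_setU _ _); apply: subset_leq_card.
apply/subsetP=> j; rewrite !inE !mxE; apply: contraR; rewrite negb_or !negbK.
by move=> /andP[/eqP -> /eqP ->]; rewrite subr0.
Qed.

Lemma phi_s_kernel_wt (F L : fieldType) (iota : {rmorphism F -> L})
    (alpha : L) (m' s n d : nat) (A : 'M[F]_(m' * s, n)) :
  (forall c, c \in code_of (phi_s iota alpha A) -> c != 0 -> (d <= wt c)%N) ->
  forall z : 'cV[F]_n, A *m z = 0 -> z != 0 -> (d <= wt z)%N.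
Proof.
move=> code_wt z Az nz_z; rewrite -(wt_map_mx iota z); apply: code_wt.
  by rewrite unfold_in /code_of -phi_s_mul Az phi_s0.
by rewrite map_mx_eq0.
Qed.

Lemma sparse_mulmx_inj (K : fieldType) (r n b d : nat) (A : 'M[K]_(r, n)) :
  (forall z : 'cV[K]_n, A *m z = 0 -> z != 0 -> (d <= wt z)%N) ->
  (2 * b < d)%N ->
  {in [pred x : 'cV[K]_n | wt x <= b]%N &, injective (mulmx A)}.
Proof.
move=> kernel_wt lt_2b_d x y wt_x wt_y Axy; apply/eqP; rewrite -subr_eq0.
apply: contraLR lt_2b_d => nz_xy; rewrite -leqNgt.
apply: leq_trans (kernel_wt _ _ nz_xy) _; first by rewrite mulmxBr Axy subrr.
by rewrite (leq_trans (wtB_le x y)) // mul2n -addnn leq_add.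
Qed.

Lemma exists_inverse_on (T : finType) (U : eqType) (x0 : T) (P : pred T)
    (f : T -> U) :
  {in P &, injective f} -> exists g : U -> T, {in P, cancel f g}.
Proof.
move=> f_inj; exists (fun u => odflt x0 [pick x in P | f x == u]).
move=> x Px; case: pickP => [y /andP[Py /eqP fy]|/(_ x)]; first exact: f_inj.
by rewrite Px eqxx.
Qed.

Theorem theorem1 (F L : finFieldType) (iota : {rmorphism F -> L})
  (b n m' s d : nat) (p : {poly F}) (alpha : L) (A : 'M[F]_(m' * s, n)) :
  (b < n)%N ->
  #|L| = (#|F| ^ s)%N ->
  primitive_poly_root iota s p alpha ->
  is_parity_check_of (phi_s iota alpha A) (n - m') d ->
  (2 * b < d)%N ->
  exists D : 'cV[F]_(m' * s) -> 'cV[F]_n,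
    forall x : 'cV[F]_n, (wt x <= b)%N -> D (A *m x) = x.
Proof.
move=> _ _ _ [_ [_ [_ code_wt]]] lt_2b_d.
have A_inj := sparse_mulmx_inj (phi_s_kernel_wt code_wt) lt_2b_d.
have [D DK] := exists_inverse_on 0 A_inj.
by exists D => x wt_x; apply: DK.
Qed.
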